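(* Consider a batched algorithm with $B$ batches and allocation functions $w_t:((\Delta_{\mathcal X})^K)^{t-1}\to\Delta_K$, $t\in[B]$: in batch $t$ each arm $a$ is pulled exactly $w_t(a)(Q^{t-1})T/B$ times, $Q_{t,a}$ is the empirical distribution of arm $a$'s samples in batch $t$, and after the $T$ samples the algorithm outputs an index $\hat i\in\arg\min_{i\in[m]}\sum_{t=1}^B\sum_{a}w_t(a)(Q^{t-1})D(Q_{t,a}\|\nu^i_a)$ (maximum likelihood, ties broken arbitrarily). Suppose that for every $Q^B=(Q_1,\dots,Q_B)\in((\Delta_{\mathcal X})^K)^B$, $$\max_{j\in[m]}\ \min_{i\ne j}\ \frac1B\sum_{t=1}^B\sum_{a=1}^Kw_t(a)(Q^{t-1})\,D(Q_{t,a}\|\nu^i_a)\ \ge R.$$ Then the minimal error exponent of this algorithm satisfies $e_m\ge R$. *)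

From HB Require Import structures.
From mathcomp Require Import all_boot all_order all_algebra.
From mathcomp Require Import all_classical all_reals.
From mathcomp Require Import topology normedtype sequences exp.
Set Implicit Arguments. Unset Strict Implicit. Unset Printing Implicit Defensive.
Import Order.TTheory GRing.Theory Num.Theory.
Local Open Scope ring_scope.

Section Defs.
Variables (R : realType) (X : finType) (K m : nat).

Definition is_dist (p : {ffun X -> R}) : bool :=
  [forall x, 0 <= p x] && (\sum_x p x == 1).

Definition is_alloc (v : {ffun 'I_K -> R}) : bool :=
  [forall a, 0 <= v a] && (\sum_a v a == 1).

Definition armdists := {ffun 'I_K -> {ffun X -> R}}.
Definition is_armdists (q : armdists) : bool := [forall a, is_dist (q a)].

Definition hist := seq armdists.
Definition is_hist (h : hist) : bool := all is_armdists h.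

(* KL divergence D(Q || P) = sum_x Q(x) ln(Q(x)/P(x)), with 0 ln 0 = 0
   (used only for P with full support) *)
Definition KL (Q P : {ffun X -> R}) : R :=
  \sum_x (if Q x == 0 then 0 else Q x * ln (Q x / P x)).

(* empirical distribution of a sample sequence; convention: uniform
   if there are no samples *)
Definition emp (s : seq X) : {ffun X -> R} :=
  [ffun x => if size s == 0%N then (#|X|%:R)^-1
             else (count_mem x s)%:R / (size s)%:R].

(* allocation functions: w t h = w_{t+1}(Q^t) (batches indexed from 0) *)
Definition allocs := nat -> hist -> {ffun 'I_K -> R}.

Definition pulls (B T : nat) (v : {ffun 'I_K -> R}) (a : 'I_K) : nat :=
  Num.truncn (v a * T%:R / B%:R).

(* expectation of f(Q_t) when arm a is sampled n a times i.i.d. from nu a *)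
Definition batch_expect (nu : 'I_K -> {ffun X -> R}) (n : 'I_K -> nat)
  (f : armdists -> R) : R :=
  \sum_(s : {dffun forall a : 'I_K, (n a).-tuple X})
    (\prod_a \prod_(x <- s a) nu a x) *
    f [ffun a => emp (s a)].

Definition ml_obj (B : nat) (w : allocs) (nu : 'I_m -> 'I_K -> {ffun X -> R})
  (h : hist) (i : 'I_m) : R :=
  \sum_(t < B) \sum_a w t (take t h) a * KL (nth 0 h t a) (nu i a).

(* probability of error under hypothesis j after T samples:
   run the remaining k batches from history h, then output dec *)
Fixpoint run_err (B T : nat) (w : allocs) (nuj : 'I_K -> {ffun X -> R})
  (dec : hist -> 'I_m) (j : 'I_m) (k : nat) (h : hist) : R :=
  match k with
  | 0%N => if dec h != j then 1 else 0
  | k'.+1 => batch_expect nuj (pulls B T (w (size h) h))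
               (fun q => run_err B T w nuj dec j k' (rcons h q))
  end.

Definition perr (B : nat) (w : allocs) (nu : 'I_m -> 'I_K -> {ffun X -> R})
  (dec : hist -> 'I_m) (j : 'I_m) (T : nat) : R :=
  run_err B T w (nu j) dec j B [::].

Local Open Scope ereal_scope.
Definition err_exponent (B : nat) (w : allocs)
  (nu : 'I_m -> 'I_K -> {ffun X -> R}) (dec : hist -> 'I_m) (j : 'I_m)
  : \bar R :=
  limn_einf (fun T : nat =>
    if perr B w nu dec j T == 0%R then +oo
    else ((- ln (perr B w nu dec j T)) / T%:R)%:E).

Definition min_err_exponent (B : nat) (w : allocs)
  (nu : 'I_m -> 'I_K -> {ffun X -> R}) (dec : hist -> 'I_m) : \bar R :=
  \big[mine/+oo]_(j < m) err_exponent B w nu dec j.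
End Defs.

From HB Require Import structures.
From mathcomp Require Import all_boot all_order all_algebra.
From mathcomp Require Import all_classical all_reals.
From mathcomp Require Import topology normedtype sequences exp ereal.
From mathcomp Require Import ring lra.
Import Order.TTheory GRing.Theory Num.Theory.
Local Open Scope ring_scope.

Set Implicit Arguments.
Unset Strict Implicit.
Unset Printing Implicit Defensive.

(* Fix the true hypothesis j and let S_j(h) be the maximum-likelihood objective
   of j on a (partial) history h.  At the end of the run, the separation
   assumption together with the ML decision rule forces Rate <= S_j / B whenever
   the decision is wrong.  Going backwards over the batches, this yields
     P_j(error) <= G^B exp(- T Rate),   G = exp(sum_a sum_x - ln nu_j,a(x)) (T+1)^(|X| K),
   because a batch of n samples from P with weight exp(n D(emp || P)) has total
   mass sum_s emp(s)^n(s), which the method of types bounds by the number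
   (n+1)^|X| of types; the factor exp(sum - ln P) pays for the rounding of the
   batch sizes.  Since ln G = O(ln T), the exponent -ln P_j(error) / T tends to
   at least Rate. *)

Lemma bigA_distr_dffun (R : comNzRingType) (I : finType) (T_ : I -> finType)
    (g : forall i, T_ i -> R) :
  \prod_i \sum_(t : T_ i) g i t = \sum_(s : {dffun forall i, T_ i}) \prod_i g i (s i).
Proof.
pose P_ i := [ffun t : T_ i => g i t].
transitivity (\sum_(t : fprod T_) \prod_(i in I) P_ i (t i)); last first.
  symmetry; rewrite (reindex (@dffun_of_fprod _ T_)); last exact/onW_bij/dffun_of_fprod_bij.
  by apply: eq_bigr => t _; apply: eq_bigr => i _; rewrite /P_ !ffunE.
rewrite (big_fprod 1 _ (fun i => P_ i)).
rewrite -(bigA_distr_big_dep (fun i => tagged_with T_ i) (fun i j => untag 0 (P_ i) j)).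
apply: eq_bigr => i _; rewrite (big_tag (fun i (t : T_ i) => g i t)).
by apply: eq_bigr => -[k t] _; rewrite /untag /=; case: eqP => // ?; rewrite ffunE.
Qed.

Lemma sum_tuple_prod (R : comNzRingType) (X : finType) (q : X -> R) n :
  \sum_(t : n.-tuple X) \prod_(y <- t) q y = (\sum_x q x) ^+ n.
Proof.
rewrite (reindex (@tuple_of_finfun X n)); last first.
  by apply: onW_bij; exists (@finfun_of_tuple X n);
    [exact: tuple_of_finfunK | exact: finfun_of_tupleK].
rewrite -[in RHS](card_ord n) -prodr_const bigA_distr_bigA.
apply: eq_bigr => f _; rewrite big_tuple.
by apply: eq_bigr => i _; rewrite tnth_map tnth_ord_tuple.
Qed.

Lemma big_seq_count_mem (R : pzSemiRingType) (X : finType) (s : seq X) (g : X -> R) :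
  \sum_(y <- s) g y = \sum_x (count_mem x s)%:R * g x.
Proof.
elim: s => [|y s IH]; first by rewrite big_nil big1 // => x _; rewrite mul0r.
rewrite big_cons IH /=.
under [in RHS]eq_bigr do rewrite natrD mulrDl.
rewrite big_split /=; congr (_ + _).
rewrite (bigD1 y) //= eqxx mul1r big1 ?addr0 // => x /negbTE.
by rewrite eq_sym => ->; rewrite mul0r.
Qed.

Lemma sum_count_mem (X : finType) (s : seq X) : (\sum_x count_mem x s)%N = size s.
Proof.
have := big_seq_count_mem s (fun _ => 1%N).
by rewrite sum1_count count_predT => ->; apply: eq_bigr => x _; rewrite mulr1 natn.
Qed.

Section EmpiricalDistribution.
Variables (R : realType) (X : finType).

Lemma dist_card_gt0 (P : {ffun X -> R}) : is_dist P -> (0 < #|X|)%N.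
Proof.
case/andP=> _ /eqP P1; rewrite lt0n; apply/eqP => /card0_eq X0.
by move: P1; rewrite big_pred0 // => /esym/eqP; rewrite oner_eq0.
Qed.

Lemma dist_ge0 (P : {ffun X -> R}) x : is_dist P -> 0 <= P x.
Proof. by case/andP=> /forallP. Qed.

Lemma dist_le1 (P : {ffun X -> R}) x : is_dist P -> P x <= 1.
Proof.
case/andP=> /forallP P0 /eqP <-.
by rewrite (bigD1 x) //= lerDl; apply: sumr_ge0 => y _; apply: P0.
Qed.

Lemma emp_gt0 (s : seq X) y : y \in s -> 0 < emp R s y.
Proof.
move=> ys; rewrite ffunE; case: ifP => [/eqP/size0nil s0|s0]; first by rewrite s0 in ys.
have cy : (0 < count_mem y s)%N by rewrite -has_count; apply/hasP; exists y => /=.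
by rewrite divr_gt0 ?ltr0n // lt0n s0.
Qed.

Lemma emp_dist (s : seq X) : (0 < #|X|)%N -> is_dist (emp R s).
Proof.
move=> X0; apply/andP; split.
  by apply/forallP => x; rewrite ffunE; case: ifP => _; rewrite ?invr_ge0 ?divr_ge0.
apply/eqP; under eq_bigr do rewrite ffunE.
have [s0|s0] := eqVneq (size s) 0%N.
  by rewrite sumr_const -[_ *+ _]mulr_natr mulVf // pnatr_eq0 -lt0n.
by rewrite -mulr_suml -natr_sum sum_count_mem mulfV // pnatr_eq0.
Qed.

Lemma KL_le_sum_ln (Q P : {ffun X -> R}) : is_dist Q -> is_dist P ->
  (forall x, 0 < P x) -> KL Q P <= \sum_x - ln (P x).
Proof.
move=> Qd Pd P0; apply: ler_sum => x _.
have lnP : ln (P x) <= 0 by rewrite ln_le0 // dist_le1.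
have [//|/eqP Qx0] := eqP; first by rewrite oppr_ge0.
have Qx : 0 < Q x by rewrite lt0r Qx0; case/andP: Qd => /forallP ->.
have lnQ : ln (Q x) <= 0 by rewrite ln_le0 // dist_le1.
rewrite ln_div ?posrE // mulrBr -[X in _ <= X]add0r.
apply: lerD; first exact: mulr_ge0_le0 (ltW Qx) lnQ.
by rewrite -mulrN ler_piMl ?oppr_ge0 // dist_le1.
Qed.

Lemma prod_expR_KL_emp (P : {ffun X -> R}) (s : seq X) : (forall x, 0 < P x) ->
  (\prod_(y <- s) P y) * expR ((size s)%:R * KL (emp R s) P) = \prod_(y <- s) emp R s y.
Proof.
move=> P0; have [/size0nil ->|s0] := eqVneq (size s) 0%N.
  by rewrite !big_nil mul0r expR0 mulr1.
have prod_expR (f : X -> R) : {in s, forall y, 0 < f y} ->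
    \prod_(y <- s) f y = expR (\sum_(y <- s) ln (f y)).
  move=> f0; rewrite expR_sum big_seq [RHS]big_seq.
  by apply: eq_bigr => y ys; rewrite lnK // posrE f0.
rewrite (prod_expR P) // (prod_expR (emp R s)); last exact: emp_gt0.
rewrite -expRD !(big_seq_count_mem s) /KL mulr_sumr -big_split /=; congr expR.
apply: eq_bigr => x _; rewrite ffunE (negbTE s0).
have [->|c0] := eqVneq (count_mem x s) 0%N; first by rewrite !mul0r eqxx mulr0 addr0.
have q0 : 0 < (count_mem x s)%:R / (size s)%:R :> R by rewrite divr_gt0 ?ltr0n ?lt0n.
rewrite gt_eqF // ln_div ?posrE //.
field; by rewrite pnatr_eq0.
Qed.

Lemma sum_tuple_prod_emp_le n :
  \sum_(t : n.-tuple X) \prod_(y <- t) emp R t y <= n.+1%:R ^+ #|X|.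
Proof.
pose is_type (c : {ffun X -> 'I_n.+1}) := (\sum_x (c x : nat) == n)%N.
pose type_dist (c : {ffun X -> 'I_n.+1}) x : R := (c x)%:R / n%:R.
pose type_of (t : n.-tuple X) := [ffun x => inord (count_mem x t) : 'I_n.+1].
have count_le (t : n.-tuple X) x : (count_mem x t <= n)%N.
  by rewrite -{2}(size_tuple t) count_size.
have type_ofP t : is_type (type_of t).
  apply/eqP; under eq_bigr do rewrite ffunE inordK ?ltnS ?count_le //.
  by rewrite sum_count_mem size_tuple.
have emp_type_of (t : n.-tuple X) :
    \prod_(y <- t) emp R t y = \prod_(y <- t) type_dist (type_of t) y.
  have [n0|n0] := eqVneq n 0%N.
    have /size0nil t0 : size t = 0%N by rewrite size_tuple.
    by rewrite t0 !big_nil.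
  apply: eq_bigr => y _.
  by rewrite /type_dist !ffunE size_tuple (negbTE n0) inordK ?ltnS ?count_le.
have type_mass c : is_type c -> \sum_(t : n.-tuple X) \prod_(y <- t) type_dist c y = 1.
  move=> /eqP cn; rewrite sum_tuple_prod.
  have [->|n0] := eqVneq n 0%N; first by rewrite expr0.
  by rewrite -mulr_suml -natr_sum cn mulfV ?expr1n // pnatr_eq0.
apply: (@le_trans _ _ (\sum_(t : n.-tuple X) \sum_(c | is_type c)
    \prod_(y <- t) type_dist c y)).
  apply: ler_sum => t _; rewrite (emp_type_of t) (bigD1 (type_of t)) //= lerDl.
  by apply: sumr_ge0 => c _; apply: prodr_ge0 => y _; rewrite divr_ge0.
rewrite exchange_big /= (eq_bigr (fun=> 1)) //.
rewrite sumr_const -natrX ler_nat.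
by apply: leq_trans (max_card _) _; rewrite card_ffun card_ord.
Qed.

Lemma sum_tuple_expR_KL_le (P : {ffun X -> R}) n (r : R) :
  is_dist P -> (forall x, 0 < P x) -> n%:R <= r <= n.+1%:R ->
  \sum_(t : n.-tuple X) (\prod_(y <- t) P y) * expR (r * KL (emp R t) P)
    <= expR (\sum_x - ln (P x)) * n.+1%:R ^+ #|X|.
Proof.
move=> Pd P0 /andP[nr rn].
set D := \sum_x - ln (P x).
have term_le (t : n.-tuple X) :
    (\prod_(y <- t) P y) * expR (r * KL (emp R t) P) <= expR D * \prod_(y <- t) emp R t y.
  rewrite -(prod_expR_KL_emp _ P0) size_tuple mulrCA -expRD.
  apply: ler_wpM2l; first by apply: prodr_ge0 => y _; exact: ltW.
  rewrite ler_expR.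
  have KLD : KL (emp R t) P <= D by rewrite KL_le_sum_ln // emp_dist // (dist_card_gt0 Pd).
  have D0 : 0 <= D.
    by apply: sumr_ge0 => x _; rewrite oppr_ge0 ln_le0 // dist_le1.
  (* r < n + 1 and KL <= D: rounding the batch size up costs at most e^D *)
  rewrite -natr1 in rn; nra.
apply: le_trans (ler_sum _ (fun t _ => term_le t)) _.
by rewrite -mulr_sumr ler_wpM2l ?expR_ge0 // sum_tuple_prod_emp_le.
Qed.
End EmpiricalDistribution.

Section Batch.
Variables (R : realType) (X : finType) (K : nat).
Implicit Types (nu : 'I_K -> {ffun X -> R}) (n : 'I_K -> nat) (f g : armdists R X K -> R).
Implicit Types (v : {ffun 'I_K -> R}) (a : 'I_K).

Lemma batch_expectZ nu n f c :
  batch_expect nu n (fun q => c * f q) = c * batch_expect nu n f.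
Proof. by rewrite /batch_expect mulr_sumr; apply: eq_bigr => s _; rewrite mulrCA. Qed.

Lemma batch_expect_ge0 nu n f : (forall a, is_dist (nu a)) -> (forall q, 0 <= f q) ->
  0 <= batch_expect nu n f.
Proof.
move=> nud f0; apply: sumr_ge0 => s _; rewrite mulr_ge0 //.
by apply: prodr_ge0 => a _; apply: prodr_ge0 => y _; apply: dist_ge0.
Qed.

Lemma run_err_ge0 m B T (w : allocs R X K) nu (dec : hist R X K -> 'I_m) j k h :
  (forall a, is_dist (nu a)) -> 0 <= run_err B T w nu dec j k h.
Proof.
move=> nud; elim: k h => [|k IHk] h /=; first by case: ifP.
exact: batch_expect_ge0.
Qed.

Lemma ler_batch_expect nu n f g : (forall a, is_dist (nu a)) ->
  (forall q, is_armdists q -> f q <= g q) -> batch_expect nu n f <= batch_expect nu n g.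
Proof.
move=> nud fg; apply: ler_sum => s _; apply: ler_wpM2l.
  by apply: prodr_ge0 => a _; apply: prodr_ge0 => y _; apply: dist_ge0.
by apply/fg/forallP => a; rewrite ffunE emp_dist // (dist_card_gt0 (nud a)).
Qed.

Lemma batch_expect_expR_KL_le nu n (r : 'I_K -> R) T :
    (forall a, is_dist (nu a)) -> (forall a x, 0 < nu a x) ->
    (forall a, (n a)%:R <= r a <= (n a).+1%:R) -> (forall a, n a <= T)%N ->
  batch_expect nu n (fun q => expR (\sum_a r a * KL (q a) (nu a)))
    <= expR (\sum_a \sum_x - ln (nu a x)) * T.+1%:R ^+ (#|X| * K).
Proof.
move=> nud nu0 nr nT; rewrite /batch_expect.
under eq_bigr do rewrite expR_sum -big_split /=.
under eq_bigr do under eq_bigr do rewrite ffunE.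
rewrite -(bigA_distr_dffun (fun a (t : (n a).-tuple X) =>
  (\prod_(y <- t) nu a y) * expR (r a * KL (emp R t) (nu a)))).
have -> : T.+1%:R ^+ (#|X| * K) = \prod_(a < K) T.+1%:R ^+ #|X| :> R.
  by rewrite prodr_const card_ord exprM.
rewrite expR_sum -big_split /=.
apply: ler_prod => a _; apply/andP; split.
  by apply: sumr_ge0 => t _; rewrite mulr_ge0 ?expR_ge0 ?prodr_ge0 // => y _; exact: ltW.
apply: le_trans (sum_tuple_expR_KL_le _ _ _) _ => //.
by rewrite ler_wpM2l ?expR_ge0 // lerXn2r ?nnegrE // ler_nat ltnS.
Qed.

Lemma pulls_itv B T v a : (0 < B)%N -> is_alloc v ->
  (pulls B T v a)%:R <= v a * T%:R / B%:R < (pulls B T v a).+1%:R.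
Proof.
move=> B0 /andP[/forallP v0 _]; apply: truncn_itv.
by rewrite divr_ge0 ?mulr_ge0.
Qed.

Lemma pulls_le B T v a : (0 < B)%N -> is_alloc v -> (pulls B T v a <= T)%N.
Proof.
move=> B0 /andP[/forallP v0 /eqP v1].
have va1 : v a <= 1 by rewrite -v1 (bigD1 a) //= lerDl; apply: sumr_ge0.
have B1 : 1 <= B%:R :> R by rewrite ler1n.
have vTB : v a * T%:R / B%:R <= T%:R.
  by rewrite ler_pdivrMr ?ltr0n //; have := v0 a; have := ler0n R T; nra.
by rewrite /pulls truncn_le_nat (le_lt_trans vTB) // ltr_nat.
Qed.
End Batch.

Section ErrorProbabilityBound.
Variables (R : realType) (X : finType) (K m B : nat).
Variables (nu : 'I_m -> 'I_K -> {ffun X -> R}) (w : allocs R X K).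
Variables (dec : hist R X K -> 'I_m) (Rate : R) (j : 'I_m) (T : nat).
Hypotheses (B_gt0 : (0 < B)%N) (nuj_dist : forall a, is_dist (nu j a))
  (nuj_gt0 : forall a x, 0 < nu j a x)
  (w_alloc : forall (t : nat) (h : hist R X K), (t < B)%N -> size h = t -> is_hist h ->
     is_alloc (w t h))
  (dec_ml : forall h : hist R X K, size h = B -> is_hist h ->
     forall i : 'I_m, ml_obj B w nu h (dec h) <= ml_obj B w nu h i)
  (Rate_sep : forall h : hist R X K, size h = B -> is_hist h ->
     exists j : 'I_m, forall i : 'I_m, i != j -> Rate <= B%:R^-1 * ml_obj B w nu h i).

Definition partial_ml_obj (h : hist R X K) : R :=
  \sum_(0 <= t < size h) \sum_a w t (take t h) a * KL (nth 0 h t a) (nu j a).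

Lemma partial_ml_obj_nil : partial_ml_obj [::] = 0.
Proof. by rewrite /partial_ml_obj big_geq. Qed.

Lemma partial_ml_obj_rcons h q :
  partial_ml_obj (rcons h q) = partial_ml_obj h + \sum_a w (size h) h a * KL (q a) (nu j a).
Proof.
rewrite /partial_ml_obj size_rcons big_nat_recr //= -cats1; congr (_ + _).
  apply: eq_big_nat => t /andP[_ th].
  by rewrite takel_cat ?(ltnW th) //; apply: eq_bigr => a _; rewrite nth_cat th.
by rewrite take_size_cat // nth_cat ltnn subnn.
Qed.

Lemma partial_ml_obj_full h : size h = B -> partial_ml_obj h = ml_obj B w nu h j.
Proof. by move=> hB; rewrite /partial_ml_obj hB big_mkord. Qed.

Lemma Rate_le_of_error h : size h = B -> is_hist h -> dec h != j ->
  Rate <= B%:R^-1 * partial_ml_obj h.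
Proof.
move=> hB hh err; rewrite partial_ml_obj_full //.
have [j' Rate_j'] := Rate_sep hB hh.
have [jj'|jj'] := eqVneq j j'; last exact: Rate_j'.
rewrite jj' in err *; apply: le_trans (Rate_j' _ err) _.
by rewrite ler_wpM2l ?invr_ge0 ?ler0n ?dec_ml.
Qed.

Definition batch_factor : R :=
  expR (\sum_a \sum_x - ln (nu j a x)) * T.+1%:R ^+ (#|X| * K).

Lemma batch_factor_ge0 : 0 <= batch_factor.
Proof. by rewrite mulr_ge0 ?expR_ge0 ?exprn_ge0. Qed.

Lemma run_err_final_le h : size h = B -> is_hist h ->
  run_err B T w (nu j) dec j 0 h
    <= expR (T%:R / B%:R * partial_ml_obj h - T%:R * Rate).
Proof.
move=> hB hh /=; case: eqVneq => [_|err]; first exact: expR_ge0.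
apply: le_trans (expR_ge1Dx _); rewrite lerDl.
have := Rate_le_of_error hB hh err; rewrite -subr_ge0 => RateS.
have -> : T%:R / B%:R * partial_ml_obj h - T%:R * Rate =
  T%:R * (B%:R^-1 * partial_ml_obj h - Rate) by ring.
exact: mulr_ge0.
Qed.

Lemma run_err_le k h : (size h + k = B)%N -> is_hist h ->
  run_err B T w (nu j) dec j k h
    <= batch_factor ^+ k * expR (T%:R / B%:R * partial_ml_obj h - T%:R * Rate).
Proof.
elim: k h => [|k IHk] h; first by rewrite addn0 expr0 mul1r; exact: run_err_final_le.
move=> hk hh /=; set v := w (size h) h; set E := _ - _.
have v_alloc : is_alloc v by apply: w_alloc; rewrite // -hk addnS ltnS leq_addr.
pose r a := v a * T%:R / B%:R.
apply: le_trans (ler_batch_expect _ (g := fun q =>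
  batch_factor ^+ k * expR E * expR (\sum_a r a * KL (q a) (nu j a))) _ _) _ => //.
  move=> q qd; apply: le_trans (IHk _ _ _) _; first by rewrite size_rcons addSnnS.
    by rewrite /is_hist all_rcons qd.
  have -> : \sum_a r a * KL (q a) (nu j a) = T%:R / B%:R * \sum_a v a * KL (q a) (nu j a).
    by rewrite mulr_sumr; apply: eq_bigr => a _; rewrite /r; ring.
  rewrite -[in X in _ <= X]mulrA -expRD partial_ml_obj_rcons /E mulrDr.
  by rewrite addrAC lexx.
rewrite batch_expectZ exprSr [in X in _ <= X]mulrAC.
apply: ler_wpM2l; first by rewrite mulr_ge0 ?exprn_ge0 ?batch_factor_ge0 ?expR_ge0.
apply: batch_expect_expR_KL_le => // a; last exact: pulls_le.
by have /andP[-> /ltW] := pulls_itv T a B_gt0 v_alloc; rewrite -natr1.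
Qed.

Lemma perr_le : perr B w nu dec j T <= batch_factor ^+ B * expR (- (T%:R * Rate)).
Proof. by have := @run_err_le B [::] erefl erefl; rewrite partial_ml_obj_nil mulr0 sub0r. Qed.

End ErrorProbabilityBound.

Section DecayRate.
Variable R : realType.
Local Open Scope ereal_scope.

Definition decay_rate (p : nat -> R) : \bar R :=
  limn_einf (fun T : nat => if p T == 0%R then +oo else ((- ln (p T)) / T%:R)%:E).

Lemma limn_einf_ge (u : (\bar R)^nat) (r : R) :
  (forall e : R, (0 < e)%R -> exists N, forall n, (N <= n)%N -> (r - e)%:E <= u n) ->
  r%:E <= limn_einf u.
Proof.
move=> ev; rewrite limn_einf_lim.
have -> : limn (einfs u) = ereal_sup (range (einfs u)) by apply/cvg_lim => //; exact: cvg_einfs_sup.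
apply/lee_subgt0Pr => e e0; have [N uN] := ev e e0.
apply: le_trans (ereal_sup_ubound (ex_intro2 _ _ N I erefl)).
by apply: le_ereal_inf_tmp => _ [k /= Nk <-]; rewrite -EFinB; apply: uN.
Qed.

Local Close Scope ereal_scope.

Lemma eventually_ln_le_linear (c : R) (d : nat) (e : R) : 0 < e ->
  exists N, forall T, (N <= T)%N -> c + d%:R * ln T.+1%:R <= e * T%:R.
Proof.
(* ln x <= a x - ln a for all a > 0, with a chosen so that d a <= e / 2 *)
move=> e0; set a := e / (2 * (d%:R + 1)).
have a0 : 0 < a by rewrite divr_gt0 // mulr_gt0 // ltr_wpDl.
have da : d%:R * a <= e / 2.
  have : a * (2 * (d%:R + 1)) = e by rewrite /a mulfVK // mulf_neq0 // gt_eqF // ltr_wpDl.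
  nra.
set M := c + d%:R * (a - ln a).
exists (Num.truncn (2 * `|M| / e)).+1 => T NT.
have lnT : ln T.+1%:R <= a * T.+1%:R - ln a.
  have := ln_sublinear (mulr_gt0 a0 (ltr0Sn R T)).
  by rewrite lnM ?posrE ?ltr0Sn // => /ltW; rewrite lerBrDl addrC.
have TM : 2 * `|M| < e * T%:R.
  rewrite [e * _]mulrC -ltr_pdivrMr //; apply: lt_le_trans (truncnS_gt _) _.
  by rewrite ler_nat.
have daT : d%:R * a * T%:R <= e / 2 * T%:R by rewrite ler_wpM2r.
have := ler_wpM2l (ler0n R d) lnT; have := ler_norm M.
rewrite /M -natr1; lra.
Qed.

Lemma decay_rate_ge (p : nat -> R) (C r : R) (d : nat) : 0 < C ->
  (forall T, 0 <= p T <= C * T.+1%:R ^+ d * expR (- (T%:R * r))) ->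
  (r%:E <= decay_rate p)%E.
Proof.
move=> C0 p_le; apply: limn_einf_ge => e e0.
have [N N_bound] := eventually_ln_le_linear (ln C) d e0.
exists N.+1 => T NT; case: eqP => [_|/eqP p0]; first exact: leey.
have /andP[p_ge0 pT_le] := p_le T; have pT : 0 < p T by rewrite lt0r p0.
have T0 : 0 < T%:R :> R by rewrite ltr0n (leq_trans _ NT).
have ln_pT : ln (p T) <= ln C + d%:R * ln T.+1%:R - T%:R * r.
  have bound_gt0 : 0 < C * T.+1%:R ^+ d * expR (- (T%:R * r)).
    by rewrite !mulr_gt0 ?exprn_gt0 ?expR_gt0 ?ltr0Sn.
  apply: le_trans (_ : _ <= ln (C * T.+1%:R ^+ d * expR (- (T%:R * r)))) _.
    by rewrite ler_ln ?posrE.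
  rewrite !lnM ?posrE ?mulr_gt0 ?exprn_gt0 ?expR_gt0 ?ltr0Sn // lnXn ?ltr0Sn //.
  by rewrite expRK (mulr_natl (ln _) d).
have := N_bound T (ltnW NT).
by rewrite lee_fin ler_pdivlMr // mulrBl; lra.
Qed.
End DecayRate.

Theorem mainTheorem12 (R : realType) (X : finType) (K m B : nat)
  (nu : 'I_m -> 'I_K -> {ffun X -> R})
  (w : allocs R X K) (dec : hist R X K -> 'I_m) (Rate : R) :
  (0 < B)%N ->
  (forall i a, is_dist (nu i a)) ->
  (forall i a x, 0 < nu i a x) ->
  (forall (t : nat) (h : hist R X K), (t < B)%N -> size h = t -> is_hist h ->
     is_alloc (w t h)) ->
  (forall h : hist R X K, size h = B -> is_hist h ->
     forall i : 'I_m, ml_obj B w nu h (dec h) <= ml_obj B w nu h i) ->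
  (forall h : hist R X K, size h = B -> is_hist h ->
     exists j : 'I_m, forall i : 'I_m, i != j ->
       Rate <= B%:R^-1 * ml_obj B w nu h i) ->
  (Rate%:E <= min_err_exponent B w nu dec)%E.
Proof.
move=> B_gt0 nu_dist nu_gt0 w_alloc dec_ml Rate_sep.
apply: (big_ind (fun x => Rate%:E <= x)%E) => [|x y ? ?|j _]; first exact: leey.
  by rewrite le_min; apply/andP.
apply: (decay_rate_ge (C := expR (\sum_a \sum_x - ln (nu j a x)) ^+ B) (d := #|X| * K * B)).
  by rewrite exprn_gt0 ?expR_gt0.
move=> T; rewrite run_err_ge0 /=; last exact: nu_dist.
have := perr_le T B_gt0 (nu_dist j) (nu_gt0 j) w_alloc dec_ml Rate_sep.
by rewrite /batch_factor exprMn !exprM.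
Qed.
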